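(* Let $N\ge1$, $f:\mathbb{N}^N\to\mathbb{N}$, $k\ge0$ and $\boldsymbol{\ell}\in\mathbb{N}^N$. Then: (a) if $k$ is even and $\boldsymbol{\ell}$ has at least one odd entry, $\binom{k}{\boldsymbol{\ell}}_f\equiv 0\pmod 2$; (b) if $k$ is even and all entries of $\boldsymbol{\ell}$ are even, $\binom{k}{\boldsymbol{\ell}}_f\equiv\binom{k/2}{\boldsymbol{\ell}/2}_f\pmod 2$; (c) if $k$ is odd, $\displaystyle\binom{k}{\boldsymbol{\ell}}_f\equiv\sum_{\mathbf{s}}f(\mathbf{s})\binom{\lfloor k/2\rfloor}{(\boldsymbol{\ell}-\mathbf{s})/2}_f\pmod 2$, the sum over all $\mathbf{s}\in\mathbb{N}^N$ such that $\boldsymbol{\ell}-\mathbf{s}\in\mathbb{N}^N$ has only even entries.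
   Context: $\mathbb{N}=\{0,1,2,\dots\}$. For $k\ge0$ and $\mathbf{x}\in\mathbb{N}^N$, $\binom{k}{\mathbf{x}}_f=\sum_{\mathbf{m}_1+\cdots+\mathbf{m}_k=\mathbf{x}} f(\mathbf{m}_1)\cdots f(\mathbf{m}_k)$ over tuples of vectors in $\mathbb{N}^N$ (the number of $f$-weighted vector compositions of $\mathbf{x}$ with $k$ parts). *)

From mathcomp Require Import all_boot.
Set Implicit Arguments. Unset Strict Implicit. Unset Printing Implicit Defensive.

Definition vec (N : nat) := {ffun 'I_N -> nat}.

Definition vbound N (x : vec N) : nat := \sum_(j < N) x j.

(* binom(k, x)_f = sum over k-tuples (m_1,...,m_k) of vectors in N^N with
   m_1 + ... + m_k = x of f(m_1)...f(m_k).  Every such m_i satisfies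
   m_i <= x componentwise, so all entries lie in [0, vbound x]; the sum
   below ranges over all such tuples (entries encoded as ordinals). *)
Definition fcomp N (f : vec N -> nat) (k : nat) (x : vec N) : nat :=
  \sum_(t : {ffun 'I_k -> {ffun 'I_N -> 'I_(vbound x).+1}}
          | [forall j : 'I_N, \sum_(i < k) (t i j : nat) == x j])
     \prod_(i < k) f [ffun j => (t i j : nat)].

Definition vhalf N (x : vec N) : vec N := [ffun j => x j %/ 2].
Definition vsub N (x y : vec N) : vec N := [ffun j => x j - y j].

From mathcomp Require Import all_boot zify.
Set Implicit Arguments. Unset Strict Implicit. Unset Printing Implicit Defensive.

(* Think of [f] as the power series F = sum_m f(m) z^m over GF(2), so that
   [fcomp f k] lists the coefficients of F^k.  Over GF(2) squaring is the
   Frobenius map, F^2 = F(z^2), hence F^(2j) = F^j(z^2) and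
   F^(2j+1) = F * F^j(z^2); read coefficientwise these are (a)-(c).
   Coefficientwise, F * (F * G(z^2)) = (F * G)(z^2) holds because swapping
   the two F-factors pairs up all off-diagonal terms of the double sum, and
   on the diagonal f(a)^2 = f(a) mod 2.  Sums over vectors are taken with
   entries bounded by some B, which is harmless once B bounds the target. *)

Lemma leq_sum_term (I : finType) (F : I -> nat) i : F i <= \sum_j F j.
Proof. by rewrite (bigD1 i) //= leq_addr. Qed.

Lemma sum_mod2_involution (T : finType) (P : pred T) (s : T -> T) (F : T -> nat) :
  (forall i, P i -> P (s i)) -> (forall i, P i -> s (s i) = i) ->
  (forall i, P i -> F (s i) = F i) ->
  \sum_(i | P i) F i = \sum_(i | P i && (s i == i)) F i %[mod 2].
Proof.
move=> Ps ss Fs.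
(* The non-fixed points split into pairs [{i, s i}]; [s] swaps the two halves
   cut out by comparing enumeration ranks. *)
pose lt_s i := enum_rank i < enum_rank (s i).
rewrite (bigID (fun i => s i == i)) /= [X in _ + X](bigID lt_s) /=.
set lower := \sum_(i | _ && lt_s i) F i.
suff -> : \sum_(i | P i && (s i != i) && ~~ lt_s i) F i = lower.
  by rewrite addnn -muln2 addnC modnMDl.
rewrite (reindex_onto s s) => [|i /andP[/andP[Pi _] _]]; last by rewrite ss.
apply: eq_big => [i|i /andP[/andP[/andP[Psi _] _] /eqP ssi]]; last first.
  by rewrite Fs // -ssi Ps.
apply/idP/idP => [/andP[/andP[/andP[Psi si_i] not_lt] /eqP ssi]|].
  have Pi : P i by rewrite -ssi Ps.
  rewrite /lt_s ssi in si_i not_lt *.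
  rewrite Pi eq_sym si_i ltn_neqAle leqNgt not_lt.
  by rewrite (inj_eq val_inj) (inj_eq enum_rank_inj) si_i.
case/andP=> /andP[Pi si_i] lt_i.
rewrite /lt_s in lt_i *.
by rewrite Ps //= ss // eqxx andbT (eq_sym i) si_i -leqNgt ltnW.
Qed.

Section BoundedCompositions.
Variables (N B : nat).

Definition bvec := {ffun 'I_N -> 'I_B.+1}.
Definition vval (m : bvec) : vec N := [ffun j => (m j : nat)].

Definition fcompB (f : vec N -> nat) k (x : vec N) : nat :=
  \sum_(t : {ffun 'I_k -> bvec} | [forall j, \sum_(i < k) (t i j : nat) == x j])
     \prod_(i < k) f (vval (t i)).

Definition vconv (g h : vec N -> nat) (x : vec N) : nat :=
  \sum_(m : bvec | [forall j, m j <= x j]) g (vval m) * h (vsub x (vval m)).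

Definition vdilate (g : vec N -> nat) (x : vec N) : nat :=
  if [forall j, ~~ odd (x j)] then g (vhalf x) else 0.

Lemma fcompB0 f x : fcompB f 0 x = [forall j, x j == 0].
Proof.
rewrite /fcompB (eq_bigl (fun _ => [forall j, x j == 0])) => [|t]; last first.
  by apply: eq_forallb => j; rewrite big_ord0 eq_sym.
rewrite big_mkcond /=; under eq_bigr do rewrite big_ord0.
by rewrite sum_nat_const card_ffun card_ord expn0 mul1n; case: ifP.
Qed.

Lemma fcompB0_dilate f x : fcompB f 0 x = vdilate (fcompB f 0) x.
Proof.
rewrite /vdilate !fcompB0; case: ifP => [/forallP even_x | /negbT].
  congr nat_of_bool; apply: eq_forallb => j.
  by rewrite ffunE; move: (even_x j); lia.
case/forallPn => j odd_xj; case: forallP => // /(_ j)/eqP xj0.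
by rewrite xj0 in odd_xj.
Qed.

Lemma fcompBS f k x : fcompB f k.+1 x = vconv f (fcompB f k) x.
Proof.
pose cons_t (p : bvec * {ffun 'I_k -> bvec}) : {ffun 'I_k.+1 -> bvec} :=
  [ffun i => if unlift ord0 i is Some i' then p.2 i' else p.1].
pose uncons_t (t : {ffun 'I_k.+1 -> bvec}) :=
  (t ord0, [ffun i => t (lift ord0 i)]).
have cons0 p : cons_t p ord0 = p.1 by rewrite ffunE unlift_none.
have consS p i : cons_t p (lift ord0 i) = p.2 i by rewrite ffunE liftK.
have consK : cancel uncons_t cons_t.
  move=> t; apply/ffunP => i; rewrite ffunE.
  by case: unliftP => [i' ->|->]; rewrite ?ffunE.
have unconsK : cancel cons_t uncons_t.
  case=> a r; rewrite /uncons_t cons0; congr pair.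
  by apply/ffunP => i; rewrite ffunE consS.
rewrite /fcompB (reindex cons_t); last exact: onW_bij (Bijective unconsK consK).
rewrite big_mkcond /=.
rewrite -(pair_bigA _ (fun a r =>
  if [forall j, \sum_(i < k.+1) (cons_t (a, r) i j : nat) == x j]
  then \prod_(i < k.+1) f (vval (cons_t (a, r) i)) else 0)) /=.
rewrite /vconv [RHS]big_mkcond; apply: eq_bigr => a _.
case: ifP => [/forallP a_le_x | /negbT/forallPn[j a_gt_x]]; last first.
  apply: big1 => r _; case: ifP => // /forallP/(_ j).
  by rewrite big_ord_recl cons0 => /eqP sum_x; rewrite -sum_x leq_addr in a_gt_x.
rewrite big_distrr [RHS]big_mkcond; apply: eq_bigr => r _ /=.
have -> : [forall j, \sum_(i < k.+1) (cons_t (a, r) i j : nat) == x j] =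
          [forall j, \sum_(i < k) (r i j : nat) == vsub x (vval a) j].
  apply: eq_forallb => j; rewrite big_ord_recl cons0 !ffunE.
  under eq_bigr do rewrite consS.
  move: (a_le_x j) (\sum_(i < k) _) => /= ? s; apply/eqP/eqP; lia.
case: ifP => // _; rewrite big_ord_recl cons0; congr (_ * _).
by apply: eq_bigr => i _; rewrite consS.
Qed.

End BoundedCompositions.

Lemma fcompB_widen N B B' f k (x : vec N) : (forall j, x j <= B) -> B <= B' ->
  fcompB B f k x = fcompB B' f k x.
Proof.
move=> x_le_B le_BB'.
pose widen (t : {ffun 'I_k -> bvec N B}) : {ffun 'I_k -> bvec N B'} :=
  [ffun i => [ffun j => widen_ord (le_BB' : B.+1 <= B'.+1) (t i j)]].
pose narrow (t : {ffun 'I_k -> bvec N B'}) : {ffun 'I_k -> bvec N B} :=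
  [ffun i => [ffun j => inord (t i j)]].
rewrite /fcompB [RHS](reindex_onto widen narrow) => [|t /forallP sum_x]; last first.
  apply/ffunP => i; apply/ffunP => j; apply: val_inj; rewrite !ffunE /= inordK //.
  rewrite ltnS (leq_trans _ (x_le_B j)) // -(eqP (sum_x j)).
  exact: (leq_sum_term (fun i => _)).
apply: eq_big => [t|t _]; last first.
  by apply: eq_bigr => i _; congr f; apply/ffunP => j; rewrite !ffunE.
have -> : narrow (widen t) == t.
  by apply/eqP/ffunP => i; apply/ffunP => j; apply: val_inj; rewrite !ffunE /= inordK.
by rewrite andbT; apply: eq_forallb => j; under [in RHS]eq_bigr do rewrite !ffunE.
Qed.

Lemma fcomp_fcompB N f k (x l : vec N) : (forall j, x j <= l j) ->
  fcomp f k x = fcompB (vbound l) f k x.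
Proof.
move=> x_le_l; apply: fcompB_widen => [j|]; first exact: (leq_sum_term x).
by apply: leq_sum => j _.
Qed.

Lemma congr_sum_mod (T : finType) (P : pred T) (F G : T -> nat) d :
  (forall i, P i -> F i = G i %[mod d]) ->
  \sum_(i | P i) F i = \sum_(i | P i) G i %[mod d].
Proof.
move=> FG; rewrite -modn_summ -[in RHS]modn_summ; congr (_ %% _).
exact: eq_bigr.
Qed.

Section Convolution.
Variables (N B : nat).
Implicit Types (g h : vec N -> nat) (x : vec N).

Lemma vconv_congr_mod h g g' x d : (forall y, g y = g' y %[mod d]) ->
  vconv B h g x = vconv B h g' x %[mod d].
Proof. by move=> gg'; apply: congr_sum_mod => m _; rewrite -modnMmr gg' modnMmr. Qed.

Lemma vsubAC x y z : vsub (vsub x y) z = vsub (vsub x z) y.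
Proof. by apply/ffunP => j; rewrite !ffunE subnAC. Qed.

Lemma vconv_vconvE h g x : vconv B h (vconv B h g) x =
  \sum_(p : bvec N B * bvec N B | [forall j, p.1 j + p.2 j <= x j])
     h (vval p.1) * (h (vval p.2) * g (vsub (vsub x (vval p.1)) (vval p.2))).
Proof.
rewrite /vconv; under eq_bigr do rewrite big_distrr.
rewrite pair_big_dep /=; apply: eq_bigl => -[a b] /=.
apply/andP/forallP => [[/forallP a_le_x /forallP b_le_xa] j | ab_le_x].
  by move: (a_le_x j) (b_le_xa j); rewrite !ffunE; lia.
by split; apply/forallP => j; move: (ab_le_x j); rewrite ?ffunE; lia.
Qed.

Lemma vconv_vconv_mod2 h g x : vconv B h (vconv B h g) x =
  \sum_(a : bvec N B | [forall j, a j + a j <= x j])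
     h (vval a) * g (vsub (vsub x (vval a)) (vval a)) %[mod 2].
Proof.
rewrite vconv_vconvE (sum_mod2_involution (s := fun p => (p.2, p.1))); first last.
- by move=> [a b] _ /=; rewrite vsubAC mulnCA.
- by case.
- by move=> [a b] /= /forallP ab_le_x; apply/forallP => j; rewrite addnC.
rewrite (reindex_onto (fun a => (a, a)) fst) => [|[a b] /andP[_ /eqP[->]]] //=.
under eq_bigl do rewrite !eqxx !andbT.
by apply: congr_sum_mod => a _; rewrite !modn2 !oddM andbA andbb.
Qed.

Lemma vconv_dilate h g x :
  \sum_(a : bvec N B | [forall j, a j + a j <= x j])
     h (vval a) * vdilate g (vsub (vsub x (vval a)) (vval a)) =
  vdilate (vconv B h g) x.
Proof.
rewrite /vdilate; case: ifP => [/forallP even_x | /negbT/forallPn[j odd_xj]].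
  apply: eq_big => [a | a /forallP a2_le_x].
    by apply: eq_forallb => j; rewrite ffunE; move: (even_x j); lia.
  have -> : [forall j, ~~ odd (vsub (vsub x (vval a)) (vval a) j)].
    by apply/forallP => j; rewrite !ffunE; move: (even_x j) (a2_le_x j); lia.
  congr (_ * g _); apply/ffunP => j; rewrite !ffunE.
  by move: (even_x j) (a2_le_x j); lia.
apply: big1 => a /forallP a2_le_x; case: ifP; rewrite ?muln0 // => /forallP/(_ j).
by move: odd_xj (a2_le_x j); rewrite !ffunE; lia.
Qed.

Lemma vconv_vconv_dilate_mod2 h g x :
  vconv B h (vconv B h (vdilate g)) x = vdilate (vconv B h g) x %[mod 2].
Proof. by rewrite vconv_vconv_mod2 vconv_dilate. Qed.

End Convolution.

Lemma fcompB_double N B f j (x : vec N) :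
  fcompB B f j.*2 x = vdilate (fcompB B f j) x %[mod 2].
Proof.
elim: j x => [|j IH] x; first by rewrite fcompB0_dilate.
have step y : fcompB B f j.*2.+1 y = vconv B f (vdilate (fcompB B f j)) y %[mod 2].
  by rewrite fcompBS; apply: vconv_congr_mod.
rewrite doubleS fcompBS (vconv_congr_mod _ _ _ step) vconv_vconv_dilate_mod2.
by rewrite /vdilate fcompBS.
Qed.

Theorem theorem5 (N : nat) (hN : 0 < N) (f : vec N -> nat) (k : nat) (l : vec N) :
  (~~ odd k -> [exists j, odd (l j)] -> fcomp f k l = 0 %[mod 2]) /\
  (~~ odd k -> [forall j, ~~ odd (l j)] ->
     fcomp f k l = fcomp f (k %/ 2) (vhalf l) %[mod 2]) /\
  (odd k ->
     fcomp f k l =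
       \sum_(s : {ffun 'I_N -> 'I_(vbound l).+1}
              | [forall j, (s j <= l j) && ~~ odd (l j - s j)])
          f [ffun j => (s j : nat)] *
          fcomp f (k %/ 2) (vhalf (vsub l [ffun j => (s j : nat)])) %[mod 2]).
Proof.
have fcomp_le (x : vec N) :
    (forall j, x j <= l j) -> fcomp f k./2 x = fcompB (vbound l) f k./2 x.
  exact: fcomp_fcompB.
rewrite divn2 -[in fcomp f k l](odd_double_half k).
rewrite (fcomp_fcompB _ _ (fun j => leqnn (l j))).
split; last split.
- move=> /negbTE-> /existsP[j odd_lj]; rewrite add0n fcompB_double /vdilate.
  by case: forallP => // /(_ j); rewrite odd_lj.
- move=> /negbTE-> even_l; rewrite add0n fcompB_double /vdilate even_l fcomp_le //.
  by move=> j; rewrite ffunE leq_div.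
move=> ->; rewrite add1n fcompBS (vconv_congr_mod _ _ _ (fcompB_double _ _ _)).
congr (_ %% 2); rewrite /vconv [LHS]big_mkcond [RHS]big_mkcond.
apply: eq_bigr => s _.
case: (boolP [forall j, s j <= l j]) => [/forallP s_le_l | /forallPn[j s_gt_l]] /=.
  rewrite /vdilate; under eq_forallb do rewrite !ffunE.
  under [in RHS]eq_forallb do rewrite s_le_l.
  case: ifP => _; rewrite ?muln0 // fcomp_le // => j.
  by rewrite !ffunE (leq_trans (leq_div _ _)) ?leq_subr.
by case: forallP => // /(_ j)/andP[s_le_l _]; rewrite s_le_l in s_gt_l.
Qed.
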